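(* Let $d\ge1$, $\sigma>0$, and let $A_0,A_1\in\mathbb{R}^{d\times d}$ be constant matrices. Let $G:[0,\infty)\to\mathbb{R}^{d\times d}$ be continuous with $A_1G(\vartheta)=G(\vartheta)A_1$ for all $\vartheta\ge0$, and let $G^*(\vartheta)=G(0)$ for $\vartheta\in[-\sigma,0)$, $G^*(\vartheta)=G(\vartheta)$ for $\vartheta\ge0$. Let $Z$ be the function defined in the context. Then \[ X(\vartheta)=\int_0^{\vartheta}Z(\vartheta-\sigma-s)\,G^*(s)\,ds,\qquad\vartheta\in[-\sigma,\infty), \] satisfies \[ \dot X(\vartheta)=A_0X(\vartheta-\sigma)+X(\vartheta-\sigma)A_1+G(\vartheta),\ \ \vartheta\ge0,\qquad X(\vartheta)=\Theta,\ \ \vartheta\in[-\sigma,0]. \]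
   Context: $\Theta$ and $I$ denote the $d\times d$ zero and identity matrices. Define matrices $Q_{r+1}(r\sigma)$, $r=0,1,2,\dots$, recursively by $Q_1(0)=I$ and $Q_{r+1}(r\sigma)=A_0Q_r((r-1)\sigma)+Q_r((r-1)\sigma)A_1$ for $r\ge 1$. Define $Z:\mathbb{R}\to\mathbb{R}^{d\times d}$ by $Z(\vartheta)=\Theta$ for $\vartheta<-\sigma$, and, for each integer $u\ge 0$ and $\vartheta\in[(u-1)\sigma,u\sigma)$, \[ Z(\vartheta)=\sum_{r=0}^{u}Q_{r+1}(r\sigma)\frac{(\vartheta-(r-1)\sigma)^r}{r!}. \] *)

From Stdlib Require Import Reals.
From Coquelicot Require Import Coquelicot.
From mathcomp Require Import all_boot all_algebra.
From mathcomp Require Import Rstruct.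

Set Implicit Arguments.
Unset Strict Implicit.
Unset Printing Implicit Defensive.

Import GRing.Theory.
Local Open Scope ring_scope.

(* Qm A0 A1 r  is the matrix  Q_{r+1}(r sigma)  of the paper:
   Q_1(0) = I,  Q_{r+1}(r sigma) = A0 Q_r((r-1)sigma) + Q_r((r-1)sigma) A1. *)
Fixpoint Qm (d : nat) (A0 A1 : 'M[R]_d) (r : nat) : 'M[R]_d :=
  match r with
  | O => 1%:M
  | S r' => A0 *m Qm A0 A1 r' + Qm A0 A1 r' *m A1
  end.

(* The index u >= 0 with t in [(u-1) sigma, u sigma), for t >= -sigma:
   u = floor(t/sigma) + 1, which is Stdlib's  up (t/sigma). *)
Definition Zidx (sigma t : R) : nat := Z.to_nat (up (Rdiv t sigma)).

Definition Zfun (d : nat) (sigma : R) (A0 A1 : 'M[R]_d) (t : R) : 'M[R]_d :=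
  if Rlt_dec t (Ropp sigma) then 0
  else \sum_(r < (Zidx sigma t).+1)
         (Rdiv (pow (Rminus t (Rmult (Rminus (INR r) 1) sigma)) r) (INR (Factorial.fact r)))
           *: Qm A0 A1 r.

Definition Gstar (d : nat) (G : R -> 'M[R]_d) (t : R) : 'M[R]_d :=
  if Rlt_dec t 0 then G 0%R else G t.

Definition Xfun (d : nat) (sigma : R) (A0 A1 : 'M[R]_d) (G : R -> 'M[R]_d)
  (t : R) : 'M[R]_d :=
  \matrix_(i, j) RInt (fun s => (Zfun sigma A0 A1 (Rminus (Rminus t sigma) s)
                                   *m Gstar G s) i j) 0%R t.

From Stdlib Require Import Reals Lra Lia.
From Coquelicot Require Import Coquelicot.
From mathcomp Require Import all_boot all_algebra.
From mathcomp Require Import Rstruct.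
Import GRing.Theory.

(* For theta >= -sigma and N large enough,
     Z(theta) = sum_(r < N) Q_(r+1)(r sigma) (theta - (r-1) sigma)_+^r / r!,
   so X(t) = sum_(r < N) Q_(r+1)(r sigma) K_r(t - r sigma) with
     K_r(c) = int_0^c (c - s)^r / r! G^*(s) ds  for c >= 0,   K_r(c) = 0  for c <= 0.
   By Cauchy's formula for repeated integration, K_r is the (r+1)-fold iterated integral of G^*
   from 0; hence K_0' = G^* on (0, oo) and K_(r+1)' = K_r everywhere. Differentiating term by term,
     X'(t) = G^*(t) + sum_r Q_(r+2)((r+1) sigma) K_r(t - sigma - r sigma),
   and Q_(r+2) = A0 Q_(r+1) + Q_(r+1) A1 together with A1 K_r = K_r A1 (A1 commutes with G^*,
   hence with its integrals) turn the sum into A0 X(t - sigma) + X(t - sigma) A1. *)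

Local Open Scope ring_scope.
Local Open Scope R_scope.

Lemma is_RInt_0 (f : R -> R) a b :
  (forall x, Rmin a b < x < Rmax a b -> f x = 0) -> is_RInt f a b 0.
Proof.
  move=> f0; apply: (is_RInt_ext (fun _ => 0)) => [x /f0 //|].
  by have := is_RInt_const a b 0; rewrite scal_zero_r.
Qed.

Lemma is_RInt_sum {I : Type} (s : seq I) (F : I -> R -> R) (l : I -> R) a b :
  (forall i, is_RInt (F i) a b (l i)) ->
  is_RInt (fun x => \sum_(i <- s) F i x) a b (\sum_(i <- s) l i).
Proof.
  move=> F_int; elim: s => [|i s IH].
    by rewrite big_nil; apply: is_RInt_0 => x _; rewrite big_nil.
  apply: (is_RInt_ext (fun x => F i x + \sum_(j <- s) F j x)) => [x _|].
    by rewrite big_cons.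
  by rewrite big_cons; apply: is_RInt_plus.
Qed.

Lemma is_derive_sum {I : Type} (s : seq I) (F : I -> R -> R) (l : I -> R) x :
  (forall i, is_derive (F i) x (l i)) ->
  is_derive (fun y => \sum_(i <- s) F i y) x (\sum_(i <- s) l i).
Proof.
  move=> F_der; elim: s => [|i s IH].
    apply: (is_derive_ext (fun _ => 0)) => [y|]; first by rewrite big_nil.
    by rewrite big_nil; apply: is_derive_const.
  apply: (is_derive_ext (fun y => F i y + \sum_(j <- s) F j y)) => [y|].
    by rewrite big_cons.
  by rewrite big_cons; apply: is_derive_plus.
Qed.

Lemma is_derive_shift (f : R -> R) c x l :
  is_derive f (x - c) l -> is_derive (fun y => f (y - c)) x l.
Proof.
  move=> f_der; have := is_derive_comp f (fun y => y - c) x l 1 f_der.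
  rewrite /scal /= /mult /= Rmult_1_l; apply; auto_derive => //; ring.
Qed.

Lemma filterlim_diff_quotient_at_right_0 (f F : R -> R) l delta : 0 < delta ->
  (forall h, 0 <= h < delta -> f h = F h) -> is_derive F 0 l ->
  filterlim (fun h => (f h - f 0) / h) (at_right 0) (locally l).
Proof.
  move=> delta_gt fF /is_derive_Reals F_der.
  apply: (filterlim_ext_loc (fun h => (F h - F 0) / h)).
    exists (mkposreal delta delta_gt) => h /= /Rabs_def2 h_lt h_gt.
    rewrite /minus opp_zero plus_zero_r in h_lt.
    by rewrite !fF //; lra.
  apply filterlim_locally => eps.
  have [alpha F_eps] := F_der eps (cond_pos eps).
  exists alpha => h /= h_lt h_gt.
  rewrite /ball /= /AbsRing_ball /abs /= /minus opp_zero plus_zero_r in h_lt.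
  by have := F_eps h; rewrite Rplus_0_l; apply => //; lra.
Qed.

Lemma continuous_Rmax_0 x : continuous (fun s => Rmax s 0) x.
Proof.
  apply: (continuous_ext (fun s => (s + Rabs s) / 2)) => [s|].
    by rewrite /Rmax /Rabs; case: Rle_dec; case: Rcase_abs; lra.
  apply: (continuous_mult (fun s => s + Rabs s) (fun _ => / 2));
    last exact: continuous_const.
  exact/continuous_plus/continuous_Rabs_comp/continuous_id/continuous_id.
Qed.

Fixpoint iterated_integral (g : R -> R) (r : nat) (c : R) : R :=
  match r with
  | O => RInt g 0 (Rmax c 0)
  | S r' => RInt (iterated_integral g r') 0 c
  end.

Definition cauchy_kernel (g : R -> R) (r : nat) (c s : R) : R :=
  (c - s) ^ r / INR (Factorial.fact r) * g s.

Definition cauchy_integral (g : R -> R) (r : nat) (c : R) : R :=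
  RInt (cauchy_kernel g r c) 0 c.

Definition trunc_pow (r : nat) (x : R) : R :=
  if Rle_dec 0 x then x ^ r / INR (Factorial.fact r) else 0.

Lemma iterated_integral_nonpos g r c : c <= 0 -> iterated_integral g r c = 0.
Proof.
  elim: r c => [|r IH] c c_le /=.
    by rewrite Rmax_right // RInt_point.
  apply/is_RInt_unique/is_RInt_0 => x.
  by rewrite Rmin_right // Rmax_left // => -[_ x_lt]; apply: IH; lra.
Qed.

Lemma iterated_integral_ext f g r c :
  (forall x, f x = g x) -> iterated_integral f r c = iterated_integral g r c.
Proof.
  by move=> fg; elim: r c => [|r IH] c /=; apply: RInt_ext => x _.
Qed.

Section IteratedIntegral.

Variable g : R -> R.
Hypothesis g_cont : forall x, continuous g x.

Lemma is_derive_RInt_continuous c : is_derive (RInt g 0) c (g c).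
Proof.
  apply: is_derive_RInt (g_cont c).
  by apply: filter_forall => b; apply/RInt_correct/ex_RInt_continuous.
Qed.

Lemma is_derive_iterated_integral_0 c :
  0 < c -> is_derive (iterated_integral g 0) c (g c).
Proof.
  move=> c_gt; apply: (is_derive_ext_loc (RInt g 0)); last exact: is_derive_RInt_continuous.
  by apply: filter_imp (open_gt 0 c c_gt) => y y_gt /=; rewrite Rmax_left //; lra.
Qed.

Lemma continuous_iterated_integral r c : continuous (iterated_integral g r) c.
Proof.
  elim: r c => [|r IH] c.
    apply: (continuous_comp (fun s => Rmax s 0) (RInt g 0)); first exact: continuous_Rmax_0.
    by apply: ex_derive_continuous; eexists; apply: is_derive_RInt_continuous.
  apply: ex_derive_continuous; eexists; apply: is_derive_RInt (IH c).
  by apply: filter_forall => b; apply/RInt_correct/ex_RInt_continuous.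
Qed.

Lemma is_derive_iterated_integral_S r c :
  is_derive (iterated_integral g r.+1) c (iterated_integral g r c).
Proof.
  apply: is_derive_RInt (continuous_iterated_integral r c).
  apply: filter_forall => b; apply/RInt_correct/ex_RInt_continuous => x _.
  exact: continuous_iterated_integral.
Qed.

Lemma is_derive_cauchy_kernel_S r c s :
  is_derive (fun c => cauchy_kernel g r.+1 c s) c (cauchy_kernel g r c s).
Proof.
  rewrite /cauchy_kernel; auto_derive => //.
  rewrite -/(INR r.+1) plus_INR mult_INR S_INR.
  have := INR_fact_neq_0 r; have := pos_INR r => ? ?.
  by rewrite /Rminus; field; split; [lra | nra].
Qed.

Lemma continuous_cauchy_kernel r c s : continuous (cauchy_kernel g r c) s.
Proof.
  apply: (continuous_mult (fun s => (c - s) ^ r / INR (Factorial.fact r))) => //.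
  by apply: (@ex_derive_continuous R_AbsRing R_NormedModule); auto_derive.
Qed.

Lemma continuity_2d_cauchy_kernel r c s : continuity_2d_pt (cauchy_kernel g r) c s.
Proof.
  apply: (continuity_2d_pt_mult (fun c s => (c - s) ^ r / INR (Factorial.fact r))).
    apply: (continuity_1d_2d_pt_comp (fun z => z ^ r / INR (Factorial.fact r))).
      apply/continuity_pt_filterlim.
      by apply: (@ex_derive_continuous _ R_NormedModule
                   (fun z => z ^ r / INR (Factorial.fact r))); auto_derive.
    apply: (continuity_2d_pt_minus (fun c _ => c) (fun _ s => s)).
      exact: continuity_2d_pt_id1.
    exact: continuity_2d_pt_id2.
  apply: (continuity_1d_2d_pt_comp g (fun _ s => s)); last exact: continuity_2d_pt_id2.
  exact/continuity_pt_filterlim/g_cont.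
Qed.

Lemma is_derive_cauchy_integral_0 c : is_derive (cauchy_integral g 0) c (g c).
Proof.
  apply: (is_derive_ext (RInt g 0)); last exact: is_derive_RInt_continuous.
  by move=> b; apply: RInt_ext => s _; rewrite /cauchy_kernel /=; lra.
Qed.

(* Leibniz's rule; the boundary term vanishes because the kernel vanishes on the diagonal. *)
Lemma is_derive_cauchy_integral_S r c :
  is_derive (cauchy_integral g r.+1) c (cauchy_integral g r c).
Proof.
  set k := cauchy_kernel g r.+1.
  have k_int c' a b : ex_RInt (k c') a b.
    by apply: ex_RInt_continuous => x _; apply: continuous_cauchy_kernel.
  have Derive_k c' s : Derive (fun c => k c s) c' = cauchy_kernel g r c' s.
    exact/is_derive_unique/is_derive_cauchy_kernel_S.
  have Derive_k_cont c' s : continuity_2d_pt (fun c s => Derive (fun c => k c s) c) c' s.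
    apply: (continuity_2d_pt_ext (cauchy_kernel g r)) => [? ?|]; first by rewrite Derive_k.
    exact: continuity_2d_cauchy_kernel.
  have k_diag : k c c = 0.
    rewrite /k /cauchy_kernel Rminus_diag pow_i; last exact/ltP.
    by rewrite /Rdiv !Rmult_0_l.
  set eps := mkposreal 1 Rlt_0_1.
  have := is_derive_RInt_param_bound_comp k (fun _ => 0) id c 0 1.
  rewrite k_diag Rmult_0_r Rmult_0_l !Rplus_0_r.
  rewrite (RInt_ext _ (cauchy_kernel g r c)) => [|s _]; last exact: Derive_k.
  apply.
  - exact: filter_forall.
  - by exists eps; apply: filter_forall.
  - by exists eps; apply: filter_forall.
  - exact: is_derive_const.
  - exact: is_derive_id.
  - exists eps; apply: filter_forall => c' s _; eexists; exact: is_derive_cauchy_kernel_S.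
  - by [].
  - by exists eps.
  - by exists eps.
  - exact/continuity_pt_filterlim/continuous_cauchy_kernel.
  - exact/continuity_pt_filterlim/continuous_cauchy_kernel.
Qed.

Lemma continuous_cauchy_integral r c : continuous (cauchy_integral g r) c.
Proof.
  apply: ex_derive_continuous; case: r => [|r].
    by exists (g c); apply: is_derive_cauchy_integral_0.
  by exists (cauchy_integral g r c); apply: is_derive_cauchy_integral_S.
Qed.

Lemma cauchy_integral_iterated r c :
  0 <= c -> cauchy_integral g r c = iterated_integral g r c.
Proof.
  elim: r c => [|r IH] c c_ge /=.
    by rewrite Rmax_left //; apply: RInt_ext => s _; rewrite /cauchy_kernel /=; lra.
  have := is_RInt_derive (cauchy_integral g r.+1) (cauchy_integral g r) 0 c.
  move=> /(_ _ _) /is_RInt_unique FTC.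
  rewrite (RInt_ext _ (cauchy_integral g r)) => [|s]; last first.
    by rewrite Rmin_left ?Rmax_right // => -[? _]; rewrite IH //; lra.
  rewrite FTC => [|x _|x _]; last exact: continuous_cauchy_integral.
    by rewrite /cauchy_integral RInt_point /minus opp_zero plus_zero_r.
  exact: is_derive_cauchy_integral_S.
Qed.

Lemma is_RInt_trunc_pow r c t : 0 <= t -> c <= t ->
  is_RInt (fun s => trunc_pow r (c - s) * g s) 0 t (iterated_integral g r c).
Proof.
  rewrite /trunc_pow => t_ge c_le; case: (Rle_dec c 0) => c_sign.
    rewrite iterated_integral_nonpos //; apply: is_RInt_0 => s.
    rewrite Rmin_left // => -[s_gt _].
    by case: (Rle_dec 0 (c - s)) => ?; [lra | rewrite Rmult_0_l].
  rewrite -[iterated_integral _ _ _]Rplus_0_r; apply: (is_RInt_Chasles _ 0 c t).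
    apply: (is_RInt_ext (cauchy_kernel g r c)) => [s|].
      rewrite Rmin_left ?Rmax_right; try lra.
      by move=> s_in; case: (Rle_dec 0 (c - s)) => [//|?]; lra.
    rewrite -cauchy_integral_iterated; last lra.
    by apply/RInt_correct/ex_RInt_continuous => s _; apply: continuous_cauchy_kernel.
  apply: is_RInt_0 => s; rewrite Rmin_left // => -[s_gt _].
  by case: (Rle_dec 0 (c - s)) => ?; [lra | rewrite Rmult_0_l].
Qed.

End IteratedIntegral.

Lemma iterated_integral_sum {I : Type} (s : seq I) (alpha : I -> R) (F : I -> R -> R) r c :
  (forall i x, continuous (F i) x) ->
  iterated_integral (fun x => \sum_(i <- s) alpha i * F i x) r c
  = \sum_(i <- s) alpha i * iterated_integral (F i) r c.
Proof.
  move=> F_cont; elim: r c => [|r IH] c /=.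
    apply/is_RInt_unique/is_RInt_sum => i.
    by apply/is_RInt_scal/RInt_correct/ex_RInt_continuous.
  rewrite (RInt_ext _ _ _ _ (fun x _ => IH x)).
  apply/is_RInt_unique/is_RInt_sum => i.
  apply/is_RInt_scal/RInt_correct/ex_RInt_continuous => x _.
  exact: continuous_iterated_integral.
Qed.

Lemma Zidx_bounds sigma t : 0 < sigma -> - sigma <= t ->
  (INR (Zidx sigma t) - 1) * sigma <= t < INR (Zidx sigma t) * sigma.
Proof.
  move=> sigma_gt t_ge; rewrite /Zidx.
  have [up_gt up_le] := archimed (t / sigma).
  have t_div : t = t / sigma * sigma by field; lra.
  have up_ge0 : Z.le 0 (up (t / sigma)).
    suff : Z.lt (-1) (up (t / sigma)) by lia.
    apply: lt_IZR; have : -1 <= t / sigma by apply/Rle_div_r; lra.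
    by rewrite /=; lra.
  rewrite INR_IZR_INZ Znat.Z2Nat.id //.
  by set q := t / sigma in up_gt up_le t_div *; rewrite t_div; split; nra.
Qed.

Lemma Gstar_nonneg {d} (G : R -> 'M[R]_d) t : 0 <= t -> Gstar G t = G t.
Proof. by move=> t_ge; rewrite /Gstar; case: (Rlt_dec t 0) => [?|//]; lra. Qed.

Lemma Gstar_comm {d} (A : 'M[R]_d) (G : R -> 'M[R]_d) :
  (forall t : R, (0 <= t)%R -> A *m G t = G t *m A) ->
  forall s, A *m Gstar G s = Gstar G s *m A.
Proof.
  move=> AG s; rewrite /Gstar.
  by case: (Rlt_dec s 0) => [s_lt|s_ge]; apply/AG/RleP; rewrite -R0E; lra.
Qed.

Lemma continuous_Gstar {d} (G : R -> 'M[R]_d) :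
  (forall (t : R) (i j : 'I_d), (0 <= t)%R ->
     filterlim (fun s => G s i j) (within (fun s => 0 <= s)%R (locally t))
               (locally (G t i j))) ->
  forall i j x, continuous (fun s => Gstar G s i j) x.
Proof.
  move=> G_cont i j x.
  apply: (continuous_ext (fun s => G (Rmax s 0) i j)) => [s|].
    rewrite /Gstar; case: (Rlt_dec s 0) => ?;
      [rewrite Rmax_right | rewrite Rmax_left] => //; lra.
  apply: (filterlim_comp _ _ _ (fun s => Rmax s 0) (fun s => G s i j) _
            (within (fun s => (0 <= s)%R) (locally (Rmax x 0)))); last first.
    by apply/G_cont/RleP/Rmax_r.
  move=> P /(continuous_Rmax_0 x) P_near; rewrite /filtermap in P_near *.
  by apply: filter_imp P_near => s; apply; apply/RleP/Rmax_r.
Qed.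

Section DelaySolution.

Context {d : nat} (sigma : R) (A0 A1 : 'M[R]_d).
Hypothesis sigma_gt0 : 0 < sigma.

Lemma Zfun_trunc_pow N th : - sigma <= th -> th + sigma < INR N * sigma ->
  Zfun sigma A0 A1 th = \sum_(r < N) trunc_pow r (th - (INR r - 1) * sigma) *: Qm A0 A1 r.
Proof.
  move=> th_ge th_lt; rewrite /Zfun; destruct Rlt_dec; first lra.
  have [u_lo u_hi] := Zidx_bounds _ _ sigma_gt0 th_ge.
  set u := Zidx sigma th in u_lo u_hi *.
  have u_lt : (u < N)%N by apply/ltP/INR_lt/(Rmult_lt_reg_r sigma); lra.
  rewrite (eq_bigr (fun r : 'I_u.+1 => trunc_pow r (th - (INR r - 1) * sigma) *: Qm A0 A1 r))
    => [|r _]; last first.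
    rewrite /trunc_pow; destruct Rle_dec as [|r_gt]; first by []; exfalso.
    have : INR r <= INR u by apply/le_INR/leP; rewrite -ltnS.
    nra.
  rewrite (big_ord_widen N (fun r => trunc_pow r (th - (INR r - 1) * sigma) *: Qm A0 A1 r) u_lt).
  rewrite big_mkcond; apply: eq_bigr => r _; case: ifP => // r_u.
  rewrite /trunc_pow; destruct Rle_dec as [r_le|]; last by rewrite scale0r.
  have : INR u + 1 <= INR r by rewrite -S_INR; apply/le_INR/leP; rewrite leqNgt r_u.
  nra.
Qed.

Definition iterated_integral_mx (F : R -> 'M[R]_d) (r : nat) (c : R) : 'M[R]_d :=
  \matrix_(a, b) iterated_integral (fun s => F s a b) r c.

Lemma iterated_integral_mxE F r c a b :
  iterated_integral_mx F r c a b = iterated_integral (fun s => F s a b) r c.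
Proof. exact: mxE. Qed.

Context (G : R -> 'M[R]_d).
Hypothesis Gstar_cont : forall a b x, continuous (fun s => Gstar G s a b) x.

Definition Xsum (N : nat) (t : R) : 'M[R]_d :=
  \sum_(r < N) Qm A0 A1 r *m iterated_integral_mx (Gstar G) r (t - INR r * sigma).

Lemma Xfun_initial t : - sigma <= t <= 0 -> Xfun sigma A0 A1 G t = 0%R.
Proof.
  move=> [t_ge t_le]; apply/matrixP => i j; rewrite !mxE.
  apply/is_RInt_unique/is_RInt_0 => s.
  rewrite Rmin_right // Rmax_left // => -[s_gt _].
  by rewrite /Zfun; destruct Rlt_dec; [rewrite mul0mx mxE | lra].
Qed.

Lemma Xfun_Xsum N t : - sigma <= t -> t < INR N * sigma -> Xfun sigma A0 A1 G t = Xsum N t.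
Proof.
  move=> t_ge t_lt; have r_sigma_ge0 (r : nat) : 0 <= INR r * sigma.
    by have := pos_INR r; nra.
  case: (Rle_dec 0 t) => t_sign; last first.
    rewrite Xfun_initial; last lra.
    rewrite /Xsum big1 // => r _; apply/matrixP => i j.
    rewrite !mxE big1 // => a _.
    by rewrite iterated_integral_mxE iterated_integral_nonpos ?mulr0 //; have := r_sigma_ge0 r; lra.
  apply/matrixP => i j; rewrite !mxE summxE; apply: is_RInt_unique.
  apply: (is_RInt_ext (fun s => \sum_(r < N) \sum_(a < d)
            Qm A0 A1 r i a * (trunc_pow r (t - INR r * sigma - s) * Gstar G s a j))).
    move=> s; rewrite Rmin_left // Rmax_right // => -[s_gt s_lt].
    change (0 < s) in s_gt; rewrite (@Zfun_trunc_pow N); try lra.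
    rewrite mulmx_suml summxE; apply: eq_bigr => r _.
    rewrite -scalemxAl mxE mxE mulr_sumr; apply: eq_bigr => a _.
    have -> : t - sigma - s - (INR r - 1) * sigma = t - INR r * sigma - s by ring.
    by rewrite mulrCA.
  apply: is_RInt_sum => r; rewrite mxE; apply: is_RInt_sum => a.
  rewrite iterated_integral_mxE; apply: is_RInt_scal.
  by apply: is_RInt_trunc_pow (Gstar_cont a j) _ _ _ t_sign _; have := r_sigma_ge0 r; lra.
Qed.

Lemma is_derive_Xsum N t i j : 0 < t ->
  is_derive (fun y => Xsum N.+1 y i j) t
    ((\sum_(r < N) Qm A0 A1 r.+1
        *m iterated_integral_mx (Gstar G) r (t - sigma - INR r * sigma) + Gstar G t)%R i j).
Proof.
  move=> t_gt.
  have Xsum_entry y : Xsum N.+1 y i j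
      = iterated_integral (fun s => Gstar G s i j) 0 y
        + \sum_(r < N) \sum_(a < d) Qm A0 A1 r.+1 i a
            * iterated_integral (fun s => Gstar G s a j) r.+1 (y - INR r.+1 * sigma).
    rewrite /Xsum big_ord_recl mxE summxE; congr (_ + _).
      by rewrite /= mul1mx mxE Rmult_0_l Rminus_0_r.
    apply: eq_bigr => r _; rewrite mxE; apply: eq_bigr => a _.
    by rewrite iterated_integral_mxE.
  apply: (is_derive_ext _ _ _ _ (fun y => esym (Xsum_entry y))).
  rewrite mxE summxE addrC; apply: is_derive_plus.
    exact: is_derive_iterated_integral_0 (Gstar_cont i j) _ t_gt.
  apply: is_derive_sum => r; rewrite mxE; apply: is_derive_sum => a.
  rewrite iterated_integral_mxE; apply: is_derive_scal; apply: is_derive_shift.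
  rewrite (_ : t - INR r.+1 * sigma = t - sigma - INR r * sigma); last by rewrite S_INR; ring.
  exact: is_derive_iterated_integral_S.
Qed.

Hypothesis A1_Gstar : forall s, A1 *m Gstar G s = Gstar G s *m A1.

Lemma iterated_integral_mx_comm r c :
  A1 *m iterated_integral_mx (Gstar G) r c = iterated_integral_mx (Gstar G) r c *m A1.
Proof.
  apply/matrixP => i j; rewrite !mxE.
  under eq_bigr => a _ do rewrite iterated_integral_mxE.
  under [RHS]eq_bigr => a _ do rewrite iterated_integral_mxE mulrC.
  rewrite -!iterated_integral_sum => [|a x|a x]; try exact: Gstar_cont.
  apply: iterated_integral_ext => s.
  have := congr1 (fun M : 'M_d => M i j) (A1_Gstar s); rewrite !mxE => ->.
  by apply: eq_bigr => a _; rewrite mulrC.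
Qed.

Lemma Xsum_recurrence N t :
  \sum_(r < N) Qm A0 A1 r.+1 *m iterated_integral_mx (Gstar G) r (t - sigma - INR r * sigma)
  = (A0 *m Xsum N (t - sigma) + Xsum N (t - sigma) *m A1)%R.
Proof.
  rewrite /Xsum mulmx_sumr mulmx_suml -big_split; apply: eq_bigr => r _ /=.
  by rewrite mulmxDl -(mulmxA (Qm A0 A1 r) A1) iterated_integral_mx_comm !mulmxA.
Qed.

End DelaySolution.

Local Close Scope R_scope.
Local Close Scope ring_scope.

Theorem theorem6 (d : nat) (sigma : R) (A0 A1 : 'M[R]_d) (G : R -> 'M[R]_d) :
  (0 < d)%N ->
  (0 < sigma)%R ->
  (* G is continuous on [0, +oo) *)
  (forall (t : R) (i j : 'I_d), (0 <= t)%R ->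
     filterlim (fun s => G s i j) (within (fun s => 0 <= s)%R (locally t))
               (locally (G t i j))) ->
  (* A1 commutes with G on [0, +oo) *)
  (forall t : R, (0 <= t)%R -> (A1 *m G t = G t *m A1)%R) ->
  let X := Xfun sigma A0 A1 G in
  (* the differential equation for t > 0 (two-sided derivative) *)
  (forall (t : R) (i j : 'I_d), (0 < t)%R ->
     is_derive (fun s => X s i j) t
       ((A0 *m X (t - sigma)%R + X (t - sigma)%R *m A1 + G t)%R i j)) /\
  (* at t = 0 (endpoint of [0,+oo)): right derivative *)
  (forall i j : 'I_d,
     filterlim (fun h => ((X h i j - X 0%R i j) / h)%R) (at_right 0%R)
       (locally ((A0 *m X (- sigma)%R + X (- sigma)%R *m A1 + G 0%R)%R i j))) /\
  (* initial condition *)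
  (forall t : R, (- sigma <= t <= 0)%R -> X t = 0%R).
Proof.
  Local Open Scope R_scope.
  move=> _ /RltP; rewrite -R0E => sigma_gt G_cont G_comm X.
  have Gs_cont := continuous_Gstar G G_cont.
  have Gs_comm := Gstar_comm A1 G G_comm.
  have X_Xsum := Xfun_Xsum sigma A0 A1 sigma_gt G Gs_cont.
  split; [|split].
  - move=> t i j /RltP t_gt.
    have [_ t_lt] := Zidx_bounds _ _ sigma_gt (ltac:(lra) : - sigma <= t).
    set N := Zidx sigma t in t_lt.
    apply: (is_derive_ext_loc (fun y => Xsum sigma A0 A1 G N.+1 y i j)).
      apply: (locally_interval _ t (- sigma) (INR N * sigma + sigma)) => /= [||y y_gt y_lt].
      + lra.
      + lra.
      + by rewrite /X (X_Xsum N.+1); [| lra | rewrite S_INR; lra].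
    rewrite /X (X_Xsum N (t - sigma)); try lra.
    rewrite -Xsum_recurrence // -(Gstar_nonneg G t (Rlt_le _ _ t_gt)).
    exact: is_derive_Xsum.
  - move=> i j; rewrite /X (Xfun_initial sigma A0 A1 G (- sigma)); last lra.
    rewrite mulmx0 mul0mx !add0r -(Gstar_nonneg G 0 (Rle_refl 0)).
    apply: (filterlim_diff_quotient_at_right_0 (fun h => Xfun sigma A0 A1 G h i j)
              (RInt (fun s => Gstar G s i j) 0) _ sigma sigma_gt).
      move=> h [h_ge h_lt]; rewrite (X_Xsum 1%N); try (rewrite /=; lra).
      by rewrite /Xsum big_ord1 mul1mx iterated_integral_mxE /= Rmult_0_l Rminus_0_r Rmax_left.
    exact: is_derive_RInt_continuous (Gs_cont i j) 0.
  - by move=> t /andP[/RleP t_ge /RleP t_le]; apply: Xfun_initial.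
Qed.
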